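(* Let $n\in\mathbb{R}_+^I$. Consider the problem: minimize $\beta(m)$ subject to $\sum_{j\in i}m_{ji}=n_i$ for $i\in\mathcal{I}$, over $m_{ji}\ge0$ ($i\in\mathcal{I}$, $j\in i$). Its Lagrange dual (with multipliers $\lambda\in\mathbb{R}^I$ for the equality constraints, after substituting $\Lambda_i=e^{\lambda_i}$) is the problem $$\text{maximize}\ \sum_{i\in\mathcal{I}}n_i\log\Lambda_i\quad\text{subject to}\quad\sum_{i: j\in i}\frac{\Lambda_i}{\mu_{ji}}\le1\ \ (j\in\mathcal{J})\quad\text{over}\ \Lambda_i\ge0,\ i\in\mathcal{I}.$$
   Context: Finite set of queues $\mathcal{J}$, finite set of routes $\mathcal{I}$ ($I=|\mathcal{I}|$), each route a subset of $\mathcal{J}$, rates $\mu_{ji}>0$ for $j\in i$. For $m=(m_{ji}: j\in i)\ge0$ with $m_j=\sum_{i: j\in i}m_{ji}$, $\beta(m)=\sum_{j\in\mathcal{J}}\sum_{i: j\in i,\,m_{ji}>0}m_{ji}\log\frac{m_{ji}\mu_{ji}}{m_j}$. *)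

From HB Require Import structures.
From mathcomp Require Import all_boot all_order all_algebra.
From mathcomp Require Import all_classical all_reals all_analysis.
Set Implicit Arguments. Unset Strict Implicit. Unset Printing Implicit Defensive.
Import Order.TTheory GRing.Theory Num.Theory.
Local Open Scope ring_scope.

(* Queues: J : finType.  Routes: I : finType, route i is the subset r i of J.
   An allocation m : J -> I -> R; only the entries m j i with j \in r i matter. *)

Section Defs.
Context {R : realType} {J I : finType} (r : I -> {set J}).

Definition mtot (m : J -> I -> R) (j : J) : R :=
  \sum_(i | j \in r i) m j i.

Definition beta (mu : J -> I -> R) (m : J -> I -> R) : R :=
  \sum_j \sum_(i | (j \in r i) && (0 < m j i))
      m j i * ln (m j i * mu j i / mtot m j).

Definition lagrangian (mu : J -> I -> R) (n : I -> R) (lam : I -> R)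
    (m : J -> I -> R) : R :=
  beta mu m + \sum_i lam i * (n i - \sum_(j in r i) m j i).

Definition dual_fun (mu : J -> I -> R) (n : I -> R) (lam : I -> R) : \bar R :=
  ereal_inf [set (lagrangian mu n lam m)%:E |
               m in [set m : J -> I -> R | forall j i, j \in r i -> 0 <= m j i]].

Definition dual_feasible (mu : J -> I -> R) (Lam : I -> R) : Prop :=
  (forall i, 0 <= Lam i) /\ forall j, \sum_(i | j \in r i) Lam i / mu j i <= 1.

Definition dual_objective (n : I -> R) (Lam : I -> R) : \bar R :=
  (\sum_i (n i)%:E * (if Lam i == 0%R then -oo else (ln (Lam i))%:E))%E.
End Defs.

From HB Require Import structures.
From mathcomp Require Import all_boot all_order all_algebra.
From mathcomp Require Import all_classical all_reals all_analysis.
From mathcomp Require Import ring lra.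
Import Order.TTheory GRing.Theory Num.Theory.
Local Open Scope ring_scope.

(* Write the Lagrangian as sum_i lam_i n_i plus, for each queue j, a sum of
   terms m_ji ln (m_ji mu_ji / (m_j e^lam_i)).  The inequality
   a ln (a / b) >= a - b bounds the queue-j part below by m_j (1 - L_j), where
   L_j = sum_{i : j in i} e^lam_i / mu_ji is the load of queue j; so the infimum
   is sum_i lam_i n_i when every load is at most 1 (attained at m = 0).  If
   L_j > 1, the allocation m_ji = t e^lam_i / mu_ji on queue j alone makes the
   Lagrangian decrease like - t L_j ln L_j, so the infimum is -oo.  For the
   equality of the two suprema, a feasible Lambda with zero entries is
   approximated by the feasible (Lambda + eps) / (1 + eps C), whose objective
   differs from that of Lambda + eps by at most (sum_i n_i) eps C. *)

Lemma sub_le_mul_ln_div (R : realType) (a b : R) :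
  0 < a -> 0 < b -> a - b <= a * ln (a / b).
Proof.
move=> a0 b0; have := @le_ln1Dx R (b / a - 1).
rewrite [1 + _]addrC subrK ltrBrDl subrr divr_gt0 // => /(_ isT).
rewrite -[b / a]invf_div lnV ?posrE ?divr_gt0 // => ln_le.
have := ler_wpM2l (ltW a0) ln_le.
rewrite mulrN mulrBr mulr1.
have -> : a / (a / b) = b by field; rewrite !gt_eqF.
lra.
Qed.

Lemma dual_objective_le_shift {R : realType} {I : finType} (n Lam : I -> R) (eps : R) :
  (forall i, 0 <= n i) -> (forall i, 0 <= Lam i) -> 0 < eps ->
  (dual_objective n Lam <= (\sum_i n i * ln (Lam i + eps))%:E)%E.
Proof.
move=> n_ge0 Lam_ge0 eps_gt0.
rewrite /dual_objective -sumEFin; apply: lee_sum => i _.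
have [Lam0|Lam_neq0] := eqVneq (Lam i) 0.
  have [->|n_neq0] := eqVneq (n i) 0; first by rewrite mul0e mul0r.
  by rewrite gt0_muleNy ?leNye // lte_fin lt_neqAle eq_sym n_neq0 n_ge0.
have Lam_gt0 : 0 < Lam i by rewrite lt_neqAle eq_sym Lam_neq0 Lam_ge0.
rewrite EFinM lee_fin ler_wpM2l // ler_ln ?posrE ?ltr_pwDr //.
by rewrite lerDl ltW.
Qed.

Section LagrangianByQueue.
Variables (R : realType) (J I : finType) (r : I -> {set J}) (mu : J -> I -> R).

Definition lagrangian_term (lam : I -> R) (m : J -> I -> R) (j : J) (i : I) : R :=
  (if 0 < m j i then m j i * ln (m j i * mu j i / mtot r m j) else 0)
  - lam i * m j i.

Definition load (lam : I -> R) (j : J) : R :=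
  \sum_(i | j \in r i) expR (lam i) / mu j i.

Lemma lagrangianE n lam m : lagrangian r mu n lam m =
  \sum_i lam i * n i + \sum_j \sum_(i | j \in r i) lagrangian_term lam m j i.
Proof.
rewrite /lagrangian /beta /lagrangian_term.
have -> : \sum_i lam i * (n i - \sum_(j in r i) m j i) =
   \sum_i lam i * n i - \sum_j \sum_(i | j \in r i) lam i * m j i.
  under eq_bigr => i _ do rewrite mulrBr mulr_sumr.
  by rewrite sumrB (exchange_big_dep xpredT).
rewrite addrCA; congr (_ + _).
by rewrite -sumrB; apply: eq_bigr => j _; rewrite sumrB big_mkcondr.
Qed.

Lemma lagrangian_term_ge lam m j i :
  j \in r i -> 0 < mu j i -> (forall k, j \in r k -> 0 <= m j k) ->
  m j i - mtot r m j * (expR (lam i) / mu j i) <= lagrangian_term lam m j i.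
Proof.
move=> ji mu0 m_ge0; rewrite /lagrangian_term.
have m_le_tot : m j i <= mtot r m j.
  rewrite /mtot (bigD1 i) //= lerDl.
  by apply: sumr_ge0 => k /andP[jk _]; exact: m_ge0.
have [mji_gt0|] := ltP 0 (m j i); last first.
  move=> mji_le0; have -> : m j i = 0 by apply/eqP; rewrite eq_le mji_le0 m_ge0.
  rewrite mulr0 subr0 sub0r oppr_le0 mulr_ge0 ?divr_ge0 ?expR_ge0 ?(ltW mu0) //.
  by apply: sumr_ge0 => k; exact: m_ge0.
have tot_gt0 : 0 < mtot r m j by exact: lt_le_trans m_le_tot.
have -> : m j i * ln (m j i * mu j i / mtot r m j) - lam i * m j i =
    m j i * ln (m j i / (mtot r m j * (expR (lam i) / mu j i))).
  have -> : m j i / (mtot r m j * (expR (lam i) / mu j i)) =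
      m j i * mu j i / mtot r m j / expR (lam i).
    by field; rewrite !gt_eqF ?expR_gt0.
  by rewrite [in RHS]ln_div ?posrE ?expR_gt0 ?divr_gt0 ?mulr_gt0 // expRK; ring.
by apply: sub_le_mul_ln_div; rewrite // mulr_gt0 ?divr_gt0 ?expR_gt0.
Qed.

Hypothesis mu_gt0 : forall j i, j \in r i -> 0 < mu j i.

Lemma sum_lagrangian_term_ge lam m j : (forall k, j \in r k -> 0 <= m j k) ->
  mtot r m j * (1 - load lam j) <= \sum_(i | j \in r i) lagrangian_term lam m j i.
Proof.
move=> m_ge0.
rewrite mulrBr mulr1 /load mulr_sumr -sumrB; apply: ler_sum => i ji.
by apply: lagrangian_term_ge => //; exact: mu_gt0.
Qed.

Lemma dual_fun_feasible n lam : dual_feasible r mu (fun i => expR (lam i)) ->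
  dual_fun r mu n lam = (\sum_i lam i * n i)%:E.
Proof.
move=> [_ load_le1]; apply/eqP; rewrite eq_le; apply/andP; split.
  apply: ereal_inf_lbound; exists (fun _ _ => 0) => //.
  rewrite lagrangianE [X in _ + X]big1 ?addr0 // => j _.
  by rewrite big1 // => i _; rewrite /lagrangian_term ltxx mulr0 subr0.
apply: le_ereal_inf_tmp => _ [m m_ge0 <-].
rewrite lee_fin lagrangianE lerDl; apply: sumr_ge0 => j _.
apply: le_trans (sum_lagrangian_term_ge lam m j (m_ge0 j)).
rewrite mulr_ge0 ?subr_ge0 //; last exact: load_le1.
by apply: sumr_ge0 => k; exact: m_ge0.
Qed.

Definition load_alloc (lam : I -> R) (j0 : J) (t : R) : J -> I -> R :=
  fun j i => if j == j0 then t * (expR (lam i) / mu j0 i) else 0.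

Lemma lagrangian_load_alloc n lam j0 t : 0 < t -> 0 < load lam j0 ->
  lagrangian r mu n lam (load_alloc lam j0 t) =
  \sum_i lam i * n i - t * load lam j0 * ln (load lam j0).
Proof.
move=> t_gt0 L_gt0; set m := load_alloc lam j0 t; set L := load lam j0.
have mj0 i : m j0 i = t * (expR (lam i) / mu j0 i) by rewrite /m /load_alloc eqxx.
have tot_j0 : mtot r m j0 = t * L.
  by rewrite /mtot mulr_sumr; apply: eq_bigr => i _; rewrite mj0.
rewrite lagrangianE (bigD1 j0) //= [X in _ + (_ + X)]big1 ?addr0; last first.
  move=> j jj0; apply: big1 => i _.
  by rewrite /lagrangian_term /m /load_alloc (negbTE jj0) ltxx mulr0 subr0.
congr (_ + _); rewrite -mulrA [L * _]mulrC mulrA mulr_sumr -sumrN.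
apply: eq_bigr => i ji; have mu0 := mu_gt0 _ _ ji.
rewrite /lagrangian_term mj0 mulr_gt0 ?divr_gt0 ?expR_gt0 // tot_j0.
have -> : t * (expR (lam i) / mu j0 i) * mu j0 i / (t * L) = expR (lam i) / L.
  by field; rewrite !gt_eqF.
rewrite lnM ?posrE ?expR_gt0 ?invr_gt0 // lnV ?posrE // expRK; ring.
Qed.

Lemma dual_fun_infeasible n lam : ~ dual_feasible r mu (fun i => expR (lam i)) ->
  dual_fun r mu n lam = -oo%E.
Proof.
move=> infeasible.
have [j0 L_gt1] : exists j, 1 < load lam j.
  apply: contrapT => no_overload; apply: infeasible.
  split=> [i|j]; first exact: expR_ge0.
  by rewrite leNgt; apply/negP => L_gt1; apply: no_overload; exists j.
set L := load lam j0 in L_gt1 *; set A := \sum_i lam i * n i.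
have lnL_gt0 : 0 < ln L by exact: ln_gt0.
have L_gt0 : 0 < L by exact: lt_trans L_gt1.
apply: eq_ninfty => x.
set t := (`|A| + `|x| + 1) / (L * ln L).
have t_gt0 : 0 < t by rewrite divr_gt0 ?mulr_gt0 // ltr_pwDr // addr_ge0.
apply: le_trans (_ : (lagrangian r mu n lam (load_alloc lam j0 t))%:E <= _)%E.
  apply: ereal_inf_lbound; exists (load_alloc lam j0 t) => // j i ji.
  rewrite /load_alloc; case: eqP => [jj0|_] //; subst j.
  by rewrite mulr_ge0 ?(ltW t_gt0) // divr_ge0 ?expR_ge0 // ltW // mu_gt0.
rewrite lee_fin lagrangian_load_alloc // -/L -/A.
have -> : t * L * ln L = `|A| + `|x| + 1 by rewrite /t; field; rewrite !gt_eqF.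
have := ler_norm A; have := ler_norm (- x); rewrite normrN; lra.
Qed.

Lemma dual_sup_le_objective_sup n :
  (ereal_sup [set dual_fun r mu n lam | lam in [set: I -> R]] <=
   ereal_sup [set dual_objective n Lam | Lam in dual_feasible r mu])%E.
Proof.
apply: ge_ereal_sup => _ [lam _ <-].
have [feasible|infeasible] := pselect (dual_feasible r mu (fun i => expR (lam i))).
  rewrite dual_fun_feasible //; apply: ereal_sup_ubound.
  exists (fun i => expR (lam i)) => //.
  rewrite /dual_objective -sumEFin; apply: eq_bigr => i _.
  by rewrite gt_eqF ?expR_gt0 // expRK mulrC.
by rewrite dual_fun_infeasible // leNye.
Qed.

Definition inv_rate_sum : R := \sum_j \sum_(i | j \in r i) (mu j i)^-1.

Lemma inv_rate_sum_ge j : \sum_(i | j \in r i) (mu j i)^-1 <= inv_rate_sum.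
Proof.
rewrite /inv_rate_sum (bigD1 j) //= lerDl.
apply: sumr_ge0 => k _; apply: sumr_ge0 => i ki.
by rewrite invr_ge0 ltW // mu_gt0.
Qed.

Lemma inv_rate_sum_ge0 : 0 <= inv_rate_sum.
Proof.
apply: sumr_ge0 => j _; apply: sumr_ge0 => i ji.
by rewrite invr_ge0 ltW // mu_gt0.
Qed.

Lemma dual_feasible_shift Lam eps C :
  0 < eps -> 0 <= C -> (forall j, \sum_(i | j \in r i) (mu j i)^-1 <= C) ->
  dual_feasible r mu Lam ->
  dual_feasible r mu (fun i => (Lam i + eps) / (1 + eps * C)).
Proof.
move=> eps_gt0 C_ge0 C_ge [Lam_ge0 load_le1].
have epsC_ge0 : 0 <= eps * C := mulr_ge0 (ltW eps_gt0) C_ge0.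
have den_gt0 : 0 < 1 + eps * C by lra.
split=> [i|j]; first by rewrite divr_ge0 ?addr_ge0 ?(ltW eps_gt0) ?(ltW den_gt0).
have -> : \sum_(i | j \in r i) (Lam i + eps) / (1 + eps * C) / mu j i =
   (\sum_(i | j \in r i) Lam i / mu j i + eps * \sum_(i | j \in r i) (mu j i)^-1)
     / (1 + eps * C).
  rewrite [eps * \sum_(_ | _) _]mulr_sumr -big_split mulr_suml; apply: eq_bigr => i ji.
  by have := mu_gt0 _ _ ji; rewrite /= => mu_pos; field; rewrite !gt_eqF.
by rewrite ler_pdivrMr // mul1r lerD ?ler_wpM2l ?(ltW eps_gt0) //.
Qed.

Lemma objective_sup_le_dual_sup n : (forall i, 0 <= n i) ->
  (ereal_sup [set dual_objective n Lam | Lam in dual_feasible r mu] <=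
   ereal_sup [set dual_fun r mu n lam | lam in [set: I -> R]])%E.
Proof.
move=> n_ge0; apply: ge_ereal_sup => _ [Lam feasible <-].
apply/lee_addgt0Pr => e e_gt0.
set N := \sum_i n i; set C := inv_rate_sum.
have N_ge0 : 0 <= N by exact: sumr_ge0.
have NC_ge0 : 0 <= N * C by rewrite mulr_ge0 ?inv_rate_sum_ge0.
set eps := e / (N * C + 1).
have eps_gt0 : 0 < eps by rewrite divr_gt0 //; lra.
have epsC_ge0 : 0 <= eps * C := mulr_ge0 (ltW eps_gt0) inv_rate_sum_ge0.
have den_gt0 : 0 < 1 + eps * C by lra.
set Lam' := fun i => (Lam i + eps) / (1 + eps * C).
have feasible' : dual_feasible r mu Lam'.
  exact: dual_feasible_shift eps_gt0 inv_rate_sum_ge0 inv_rate_sum_ge feasible.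
have Lam'_gt0 i : 0 < Lam' i.
  by rewrite divr_gt0 // ltr_wpDl ?feasible.1.
have dual_ge : ((\sum_i ln (Lam' i) * n i)%:E <=
    ereal_sup [set dual_fun r mu n lam | lam in [set: I -> R]])%E.
  apply: ereal_sup_ubound; exists (fun i => ln (Lam' i)) => //.
  rewrite dual_fun_feasible // (_ : (fun i => expR (ln (Lam' i))) = Lam') //.
  by apply/funext => i; rewrite lnK ?posrE.
have shiftE : \sum_i n i * ln (Lam i + eps) =
    \sum_i ln (Lam' i) * n i + N * ln (1 + eps * C).
  rewrite /N mulr_suml -big_split /=; apply: eq_bigr => i _.
  have -> : Lam i + eps = Lam' i * (1 + eps * C) by rewrite /Lam'; field; lra.
  by rewrite lnM ?posrE //; ring.
have err_le : N * ln (1 + eps * C) <= e.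
  have ln_le : ln (1 + eps * C) <= eps * C by apply: le_ln1Dx; lra.
  apply: le_trans (ler_wpM2l N_ge0 ln_le) _.
  have -> : N * (eps * C) = e * (N * C) / (N * C + 1) by rewrite /eps; field; lra.
  by rewrite ler_pdivrMr ?ler_wpM2l ?lerDl ?(ltW e_gt0); lra.
apply: le_trans (dual_objective_le_shift n Lam eps n_ge0 feasible.1 eps_gt0) _.
by rewrite shiftE EFinD leeD.
Qed.
End LagrangianByQueue.

Theorem lemma11 (R : realType) (J I : finType) (r : I -> {set J})
    (mu : J -> I -> R) (n : I -> R) :
  injective r ->
  (forall j i, j \in r i -> 0 < mu j i) ->
  (forall i, 0 <= n i) ->
  (forall lam : I -> R,
     (dual_feasible r mu (fun i => expR (lam i)) ->
        dual_fun r mu n lam = (\sum_i n i * ln (expR (lam i)))%:E) /\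
     (~ dual_feasible r mu (fun i => expR (lam i)) ->
        dual_fun r mu n lam = -oo%E)) /\
  ereal_sup [set dual_fun r mu n lam | lam in [set: I -> R]] =
  ereal_sup [set dual_objective n Lam | Lam in dual_feasible r mu].
Proof.
move=> _ mu_gt0 n_ge0; split=> [lam|].
  split=> [feasible|]; last exact: dual_fun_infeasible.
  rewrite dual_fun_feasible //; congr (_%:E).
  by apply: eq_bigr => i _; rewrite expRK mulrC.
apply/eqP; rewrite eq_le dual_sup_le_objective_sup //.
exact: objective_sup_le_dual_sup.
Qed.
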